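(* Let $c_1\le\cdots\le c_r$ be integers, let $Y=\mathbb P^1$, and let \[ \pi\colon X=\mathbb P_{\mathbb P^1}(\mathcal O_{\mathbb P^1}\oplus \mathcal O_{\mathbb P^1}(c_1)\oplus \cdots \oplus \mathcal O_{\mathbb P^1}(c_r))\to \mathbb P^1 \] be the projection, a $\mathbb P^r$-bundle over $\mathbb P^1$. If there exists an extremal ray $R$ of $\mathrm{NE}(X)$ such that $K_{X/Y}\cdot R=0$, then $c_1=\cdots =c_r=0$, that is, $X=\mathbb P^r\times \mathbb P^1$ and $\pi$ is the second projection.
   Context: Work over $\mathbb C$. $K_{X/Y}=K_X-\pi^*K_Y$ denotes the relative canonical divisor, $\mathrm{NE}(X)$ the cone of curves of $X$ (spanned by classes of curves in $N_1(X)$), and $X$ with $\pi$ is a toric variety and toric morphism. *)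

From HB Require Import structures.
From mathcomp Require Import all_boot all_order all_algebra.
Set Implicit Arguments. Unset Strict Implicit. Unset Printing Implicit Defensive.
Import Order.TTheory GRing.Theory Num.Theory.
Local Open Scope ring_scope.

(* Rays are indexed by a finite type T, the lattice N = Z^L has coordinates
   indexed by a finite type L, v t is the primitive generator of ray t, and
   maxc s says that the set of rays s spans a maximal cone of the (smooth,
   complete) fan.  Elements of N_1(X)_R are represented, via the standard
   identification N_1(X)_R = {b in R^T | sum_t b_t v_t = 0} (dual to
   Pic(X)_R = R^T / M_R), as vectors b : T -> R, b_t = D_t . C. *)

(* Class of the torus-invariant curve V(tau), tau = s /\ s' a wall between
   the adjacent maximal cones s, s': the wall relation
   v_t + v_t' + sum_{rho in tau} b_rho v_rho = 0, i.e. b_rho = D_rho . V(tau). *)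
Definition wall_class (R : numDomainType) (T L : finType)
    (v : T -> L -> int) (maxc : {set T} -> Prop) (b : T -> R) : Prop :=
  exists s s' : {set T},
    [/\ maxc s, maxc s', #|s :\: s'| = 1%N & #|s' :\: s| = 1%N] /\
    [/\ (forall t, t \notin s :|: s' -> b t = 0),
        (forall t, t \in s :\: s' -> b t = 1),
        (forall t, t \in s' :\: s -> b t = 1) &
        (forall l, \sum_t b t * (v t l)%:~R = 0)].

Definition NE (R : numDomainType) (T L : finType)
    (v : T -> L -> int) (maxc : {set T} -> Prop) (b : T -> R) : Prop :=
  exists (N : nat) (lam : 'I_N -> R) (w : 'I_N -> T -> R),
    [/\ (forall k, 0 <= lam k), (forall k, wall_class v maxc (w k)) &
        (forall t, b t = \sum_k lam k * w k t)].

Definition extremal_ray (R : numDomainType) (T L : finType)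
    (v : T -> L -> int) (maxc : {set T} -> Prop) (b : T -> R) : Prop :=
  [/\ NE v maxc b, (exists t, b t != 0) &
      forall x y : T -> R, NE v maxc x -> NE v maxc y ->
        (exists mu, 0 <= mu /\ forall t, x t + y t = mu * b t) ->
        (exists a, 0 <= a /\ forall t, x t = a * b t) /\
        (exists a, 0 <= a /\ forall t, y t = a * b t)].

(* Intersection number of the T-invariant divisor sum_t a_t D_t with a class b. *)
Definition dot (R : numDomainType) (T : finType) (a : T -> int) (b : T -> R) : R :=
  \sum_t (a t)%:~R * b t.

Definition canonical (T : finType) : T -> int := fun _ => -1.
Arguments canonical : clear implicits.

(* Toric morphism pi : X -> P^1 induced by the lattice map phi : N -> Z.
   P^1 has rays +1 (divisor D_+) and -1 (divisor D_-); the pullback of the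
   Cartier divisor a_+ D_+ + a_- D_- is sum_t a(t) D_t, with coefficient
   -psi(phi(v_t)) where psi is its support function. *)
Definition pullbackP1 (T L : finType) (v : T -> L -> int) (phi : L -> int)
    (ap am : int) : T -> int :=
  fun t => let y := \sum_l phi l * v t l in
           if (0 <= y)%R then ap * y else am * (- y).

(* K_{X/Y} = K_X - pi^* K_{P^1}, with K_{P^1} = - D_+ - D_-. *)
Definition rel_canonical (T L : finType) (v : T -> L -> int) (phi : L -> int)
    : T -> int :=
  fun t => canonical T t - pullbackP1 v phi (-1) (-1) t.

(* Lattice N = Z^r (fibre coordinates Some i) x Z (base coordinate None).
   Rays: inl None    : v_0 = -(e_1+...+e_r)
         inl (Some i): e_i
         inr true    : e_base
         inr false   : -e_base + sum_i c_i e_i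
   Maximal cones: all fibre rays but one, plus one base ray. *)
Definition Xray (r : nat) := (option 'I_r + bool)%type.
Definition Xlat (r : nat) := option 'I_r.

Definition Xv (r : nat) (c : 'I_r -> int) (t : Xray r) (l : Xlat r) : int :=
  match t, l with
  | inl None, Some _ => -1
  | inl None, None => 0
  | inl (Some i), Some j => (i == j)%:R
  | inl (Some _), None => 0
  | inr true, Some _ => 0
  | inr true, None => 1
  | inr false, Some j => c j
  | inr false, None => -1
  end.

Definition Xmaxcone (r : nat) (s : {set Xray r}) : Prop :=
  exists (j : option 'I_r) (b : bool),
    s = [set t | match t with inl k => k != j | inr b' => b' == b end].

Definition Xphi (r : nat) (l : Xlat r) : int :=
  match l with None => 1 | Some _ => 0 end.

(** A class in N_1(X) is pinned down by two coordinates, its degrees on the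
    divisor D_{v_0} of the ray v_0 = -(e_1 + ... + e_r) and on a fibre of
    the projection.  In these coordinates NE(X) is the cone spanned by the
    class f of a line in a fibre and the class g of the minimal section,
    of degree m = min(0, c_1, ..., c_r) on D_{v_0}.  Every class of NE(X)
    is x f + y g with x, y >= 0, so an extremal ray is spanned by f or g.
    Since K_{X/Y} . f = -(r+1) < 0, a K_{X/Y}-trivial extremal ray is
    spanned by g, and K_{X/Y} . g = sum_i (c_i - m) - m is a sum of
    non-negative integers, which vanishes only when m = c_1 = ... = c_r = 0. *)
From mathcomp Require Import all_boot all_order all_algebra ring.
Import Order.TTheory GRing.Theory Num.Theory.
Set Implicit Arguments. Unset Strict Implicit.
Local Open Scope ring_scope.

Section ToricCurves.

Variables (R : realFieldType) (T L : finType).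
Variables (v : T -> L -> int) (maxc : {set T} -> Prop).

Definition N1 (b : T -> R) : Prop := forall l, \sum_t b t * (v t l)%:~R = 0.

Lemma dot_comb (a : T -> int) n (lam : 'I_n -> R) (w : 'I_n -> T -> R)
    (b : T -> R) :
  (forall t, b t = \sum_k lam k * w k t) ->
  dot a b = \sum_k lam k * dot a (w k).
Proof.
move=> bE; rewrite /dot; under eq_bigr do rewrite bE mulr_sumr.
rewrite exchange_big; apply: eq_bigr => k _ /=.
by rewrite mulr_sumr; apply: eq_bigr => t _; rewrite mulrCA.
Qed.

Lemma dot_comb2 (a : T -> int) (x y : R) (f g : T -> R) :
  dot a (fun t => x * f t + y * g t) = x * dot a f + y * dot a g.
Proof.
by rewrite /dot !mulr_sumr -big_split; apply: eq_bigr => t _ /=; ring.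
Qed.

Lemma NE_dot_ge0 (a : T -> int) (b : T -> R) :
  (forall w : T -> R, wall_class v maxc w -> 0 <= dot a w) ->
  NE v maxc b -> 0 <= dot a b.
Proof.
move=> a_nef [n [lam [w [lam_ge0 w_wall bE]]]].
rewrite (dot_comb a bE); apply: sumr_ge0 => k _.
exact: mulr_ge0 (lam_ge0 k) (a_nef _ (w_wall k)).
Qed.

Lemma NE_N1 (b : T -> R) : NE v maxc b -> N1 b.
Proof.
move=> [n [lam [w [_ w_wall bE]]]] l.
under eq_bigr do rewrite bE mulr_suml.
rewrite exchange_big big1 // => k _ /=.
have [? [? [_ [_ _ _ w_N1]]]] := w_wall k.
by under eq_bigr do rewrite -mulrA; rewrite -mulr_sumr w_N1 mulr0.
Qed.

Lemma NE_scale_wall (lam : R) (w : T -> R) :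
  wall_class v maxc w -> 0 <= lam -> NE v maxc (fun t => lam * w t).
Proof.
move=> w_wall lam_ge0; exists 1%N, (fun _ => lam), (fun _ => w).
by split=> // t; rewrite big_ord1.
Qed.

End ToricCurves.

Lemma big_option (R : nmodType) (I : finType) (F : option I -> R) :
  \sum_(j : option I) F j = F None + \sum_(i : I) F (Some i).
Proof.
rewrite ![index_enum _]unlock [@Finite.enum in LHS]unlock /=.
by rewrite big_cons big_map.
Qed.

Section ProjectiveBundle.

Variables (R : realFieldType) (r : nat) (c : 'I_r -> int).
Local Notation KXY := (rel_canonical (Xv c) (@Xphi r)).

Lemma big_Xray (F : Xray r -> R) :
  \sum_t F t =
    F (inl None) + \sum_i F (inl (Some i)) + (F (inr true) + F (inr false)).
Proof. by rewrite big_sumType big_option big_bool. Qed.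

(* Degree of the summand O(c_j); [None] indexes the summand O. *)
Definition summand_deg (j : option 'I_r) : int :=
  if j is Some k then c k else 0.

Lemma N1_coord (b : Xray r -> R) : N1 (Xv c) b ->
  b (inr true) = b (inr false) /\
  forall j, b (inl j) = b (inl None) - (summand_deg j)%:~R * b (inr false).
Proof.
move=> b_N1; split.
  have := b_N1 None; rewrite big_Xray big1 => [|i _]; last by rewrite mulr0.
  by rewrite /= mulr0 !add0r mulr1 mulrN1 => /eqP; rewrite subr_eq0 => /eqP.
case=> [i|]; last by rewrite mul0r subr0.
have := b_N1 (Some i); rewrite big_Xray (bigD1 i) //= big1 => [|k /negbTE ->];
  last by rewrite mulr0.
rewrite eqxx mulr1 mulr0 !addr0 add0r mulrN1 => b_rel.
by rewrite -[LHS]subr0 -b_rel; ring.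
Qed.

Definition fibre_line (t : Xray r) : R := if t is inl _ then 1 else 0.

Definition section_curve (m : int) (t : Xray r) : R :=
  match t with
  | inl None => m%:~R
  | inl (Some i) => (m - c i)%:~R
  | inr _ => 1
  end.

Lemma N1_decomp (m : int) (b : Xray r -> R) : N1 (Xv c) b ->
  forall t, b t = (b (inl None) - m%:~R * b (inr true)) * fibre_line t
                  + b (inr true) * section_curve m t.
Proof.
move=> /N1_coord [bT bS] [[i|]|[]] /=; rewrite -?bT; try ring.
by rewrite [LHS]bS -bT /=; ring.
Qed.

Definition Xcone (j : option 'I_r) (b : bool) : {set Xray r} :=
  [set t | match t with inl k => k != j | inr b' => b' == b end].

Lemma Xcone_maxc j b : Xmaxcone (Xcone j b).
Proof. by exists j, b. Qed.

Lemma fibre_line_wall (i : 'I_r) : wall_class (Xv c) (@Xmaxcone r) fibre_line.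
Proof.
exists (Xcone None true), (Xcone (Some i) true); split.
  split; try exact: Xcone_maxc.
  - rewrite (_ : _ :\: _ = [set inl (Some i)]) ?cards1 //.
    by apply/setP => [[[k|]|[]]]; rewrite !inE /= ?andbT ?negbK.
  - rewrite (_ : _ :\: _ = [set inl None]) ?cards1 //.
    by apply/setP => [[[k|]|[]]]; rewrite !inE.
split; try by move=> [[k|]|[]]; rewrite !inE.
move=> [j|]; rewrite big_Xray /=.
  rewrite (bigD1 j) //= big1 => [|k /negbTE ->]; rewrite ?eqxx ?mulr0 //=.
  by ring.
by rewrite big1 => [|k _]; rewrite ?mulr0; ring.
Qed.

Lemma section_curve_wall (j : option 'I_r) :
  wall_class (Xv c) (@Xmaxcone r) (section_curve (summand_deg j)).
Proof.
exists (Xcone j true), (Xcone j false); split.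
  split; try exact: Xcone_maxc.
  - rewrite (_ : _ :\: _ = [set inr true]) ?cards1 //.
    by apply/setP => [[k|[]]]; rewrite !inE /= ?andbN ?andNb.
  - rewrite (_ : _ :\: _ = [set inr false]) ?cards1 //.
    by apply/setP => [[k|[]]]; rewrite !inE /= ?andbN ?andNb.
split; try by move=> [[k|]|[]]; rewrite !inE /= ?andbF ?andNb.
  move=> [k|[]]; rewrite !inE /= ?orbT //= orbb negbK => /eqP ->.
  by case: j => [k'|] /=; rewrite ?subrr.
move=> [i|]; rewrite big_Xray /=.
  rewrite (bigD1 i) //= big1 => [|k /negbTE ->]; rewrite ?eqxx ?mulr0 //=.
  by ring.
by rewrite big1 => [|k _]; rewrite ?mulr0; ring.
Qed.

(* A fibre of the projection, and D_{v_0} - m times it. *)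
Definition fibre_divisor : Xray r -> int :=
  fun t => if t is inr true then 1 else 0.

Definition section_divisor (m : int) : Xray r -> int := fun t =>
  match t with inl None => 1 | inr true => - m | _ => 0 end.

Lemma dot_fibre_divisor (b : Xray r -> R) :
  dot fibre_divisor b = b (inr true).
Proof. by rewrite /dot big_Xray big1 => [|i _] /=; rewrite ?mul0r; ring. Qed.

Lemma dot_section_divisor (m : int) (b : Xray r -> R) :
  dot (section_divisor m) b = b (inl None) - m%:~R * b (inr true).
Proof.
by rewrite /dot big_Xray big1 => [|i _] /=; rewrite ?mul0r ?intrN; ring.
Qed.

Lemma rel_canonicalE t : KXY t = if t is inl _ then -1 else 0.
Proof.
rewrite /rel_canonical /pullbackP1 /canonical big_option /=.
by rewrite big1 => [|i _]; rewrite ?mul0r // addr0 mul1r; case: t => [[k|]|[]].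
Qed.

Lemma dot_rel_canonical (b : Xray r -> R) :
  dot KXY b = - (b (inl None) + \sum_i b (inl (Some i))).
Proof.
rewrite /dot; under eq_bigr do rewrite rel_canonicalE.
rewrite big_Xray /=; under eq_bigr do rewrite mulN1r.
by rewrite sumrN !mul0r !addr0 mulN1r opprD.
Qed.

Lemma dot_rel_canonical_fibre_line : dot KXY fibre_line = - (r.+1)%:R.
Proof.
by rewrite dot_rel_canonical sumr_const card_ord /= -mulr_natr -natr1; ring.
Qed.

Lemma dot_rel_canonical_section_curve (m : int) :
  dot KXY (section_curve m) = (\sum_i (c i - m) - m)%:~R.
Proof.
rewrite dot_rel_canonical /= rmorphB rmorph_sum /= opprD addrC -sumrN.
by congr (_ - _); apply: eq_bigr => i _; rewrite !rmorphB opprB.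
Qed.

Section MinimalSection.

Variable j0 : option 'I_r.
Hypothesis j0_min : forall j, summand_deg j0 <= summand_deg j.
Local Notation m := (summand_deg j0).

Lemma wall_fibre_section_ge0 (w : Xray r -> R) :
  wall_class (Xv c) (@Xmaxcone r) w ->
  0 <= w (inr true) /\ m%:~R * w (inr true) <= w (inl None).
Proof.
move=> [s [s' [[[j [b sE]] _ _ _] [off0 _ in1 w_N1]]]].
have [wT wS] := N1_coord w_N1.
have off_s_ge0 t : t \notin s -> 0 <= w t.
  move=> t_s; have [t_s'|t_s'] := boolP (t \in s').
    by rewrite in1 // inE t_s.
  by rewrite off0 // inE negb_or t_s.
have wT_ge0 : 0 <= w (inr true).
  have := off_s_ge0 (inr (~~ b)); rewrite sE inE /=.
  by case: b {sE} => /=; rewrite ?wT; apply.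
split=> //; have := off_s_ge0 (inl j); rewrite sE inE eqxx => /(_ isT).
rewrite (wS j) -wT subr_ge0; apply: le_trans.
by apply: ler_wpM2r; rewrite ?ler_int.
Qed.

Lemma NE_fibre_ge0 (b : Xray r -> R) :
  NE (Xv c) (@Xmaxcone r) b -> 0 <= b (inr true).
Proof.
rewrite -dot_fibre_divisor; apply: NE_dot_ge0 => w /wall_fibre_section_ge0.
by rewrite dot_fibre_divisor => -[].
Qed.

Lemma NE_section_ge0 (b : Xray r -> R) :
  NE (Xv c) (@Xmaxcone r) b -> 0 <= b (inl None) - m%:~R * b (inr true).
Proof.
rewrite -dot_section_divisor; apply: NE_dot_ge0 => w /wall_fibre_section_ge0.
by rewrite dot_section_divisor subr_ge0 => -[].
Qed.

Lemma section_deg_eq0 : \sum_i (c i - m) - m = 0 -> forall i, c i = 0.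
Proof.
have m_le0 : m <= 0 := j0_min None.
have c_ge i : 0 <= c i - m by rewrite subr_ge0 (j0_min (Some i)).
move/eqP; rewrite paddr_eq0 ?sumr_ge0 ?oppr_ge0 // oppr_eq0.
case/andP=> /eqP sum_eq0 /eqP m0 i.
have /eqP := @psumr_eq0P _ _ _ _ (fun i _ => c_ge i) sum_eq0 i isT.
by rewrite m0 subr0 => /eqP.
Qed.

Lemma NE_decomp (b : Xray r -> R) : NE (Xv c) (@Xmaxcone r) b ->
  exists x y, [/\ 0 <= x, 0 <= y &
                  forall t, b t = x * fibre_line t + y * section_curve m t].
Proof.
move=> b_NE; exists (b (inl None) - m%:~R * b (inr true)), (b (inr true)).
split; [exact: NE_section_ge0 | exact: NE_fibre_ge0 |].
exact: N1_decomp (NE_N1 b_NE).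
Qed.

Lemma extremal_rel_canonical_trivial (i : 'I_r) (b : Xray r -> R) :
  extremal_ray (Xv c) (@Xmaxcone r) b -> dot KXY b = 0 ->
  dot KXY (section_curve m) = 0.
Proof.
move=> [b_NE [t0 bt0_neq0] b_extremal] b_Ktriv.
have [x [y [x_ge0 y_ge0 bE]]] := NE_decomp b_NE.
have Kb : 0 = x * - (r.+1)%:R + y * dot KXY (section_curve m).
  rewrite -b_Ktriv -dot_rel_canonical_fibre_line -dot_comb2.
  by apply: eq_bigr => t _; rewrite -bE.
have [|[a [_ xfE]] _] := b_extremal _ _
  (NE_scale_wall (fibre_line_wall i) x_ge0)
  (NE_scale_wall (section_curve_wall j0) y_ge0).
  by exists 1; split=> // t; rewrite mul1r -bE.
have y_neq0 : y != 0.
  apply: contraNneq bt0_neq0 => y0.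
  move: Kb; rewrite y0 mul0r addr0 => Kb.
  have : x * (r.+1)%:R == 0 by rewrite -oppr_eq0 -mulrN -Kb.
  by rewrite mulf_eq0 pnatr_eq0 orbF bE y0 => /eqP->; rewrite !mul0r addr0.
have x0 : x = 0.
  have := xfE (inr true); rewrite bE /= !mulr0 add0r mulr1 => /esym/eqP.
  rewrite mulf_eq0 (negbTE y_neq0) orbF => /eqP a0.
  by have := xfE (inl None); rewrite a0 mul0r mulr1.
move: Kb; rewrite x0 mul0r add0r => /esym/eqP.
by rewrite mulf_eq0 (negbTE y_neq0) => /eqP.
Qed.

End MinimalSection.

End ProjectiveBundle.

Theorem lemma3p1 (R : realFieldType) (r : nat) (c : 'I_r -> int) :
  (forall i j : 'I_r, (i <= j)%N -> c i <= c j) ->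
  (exists b : Xray r -> R,
     extremal_ray (Xv c) (@Xmaxcone r) b /\
     dot (rel_canonical (Xv c) (@Xphi r)) b = 0) ->
  forall i : 'I_r, c i = 0.
Proof.
move=> _ [b [b_extremal b_Ktriv]] i.
have [j0 _ j0_min'] := @arg_minP _ _ _ None xpredT (summand_deg c) isT.
have j0_min j : summand_deg c j0 <= summand_deg c j by exact: j0_min'.
have := extremal_rel_canonical_trivial j0_min i b_extremal b_Ktriv.
rewrite dot_rel_canonical_section_curve => /eqP; rewrite intr_eq0 => /eqP.
by move=> /(section_deg_eq0 j0_min).
Qed.
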